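(* Let $\mathcal{V}_t$ be a variety of $\Omega$-algebras satisfying $t(x,y)=x$ for some $t\in T_2$, let $X$ be a set, let $B=X\mathcal{V}_t^{\,p}$ be the free $\mathcal{V}_t^{\,p}$-algebra over $X$, and let $\delta$ be any congruence of $B$. Then $B/\delta$ is a semilattice sum of $\mathcal{V}_t$-algebras, i.e. $B/\delta\in\mathcal{V}_t\circ\mathcal{S}$. Moreover, if $\varrho_B$ is the semilattice replica congruence of $B$ and $\psi=\delta\vee\varrho_B$, then $\psi/\delta$ is the semilattice replica congruence of $B/\delta$, and each $\psi/\delta$-class lies in $\mathcal{V}_t$.
   Context: Standing conventions: $\Omega$-algebras are of a plural similarity type (no nullary operation symbols, at least one operation symbol of arity $\ge2$). $T_n$ is the set of $\Omega$-terms in $x_1,\dots,x_n$ in which all $n$ variables occur. An identity is regular if the same variables occur on both sides. $\mathcal{S}$ is the variety of $\Omega$-algebras satisfying all regular identities ($\Omega$-semilattices). $\mathcal{V}\circ\mathcal{S}$ is the class of $\Omega$-algebras $A$ having a congruence $\theta$ with $A/\theta\in\mathcal{S}$ and every $\theta$-class (a subalgebra) in $\mathcal{V}$ (a semilattice sum of $\mathcal{V}$-algebras). The semilattice replica congruence of an algebra $A$ is the smallest congruence $\varrho$ of $A$ with $A/\varrho\in\mathcal{S}$. Prolongation: for an identity $\sigma$ of the form $u(y_1,\dots,y_n)=v(y_1,\dots,y_n)$ and $m\ge1$, $\sigma^p_m$ is the set of identities $u(r_1,\dots,r_n)=v(r_1,\dots,r_n)$ obtained by substituting $r_i(x_1,\dots,x_m)$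 for $y_i$, with $r_i$ ranging over $T_m$; $\sigma^p=\bigcup_m\sigma^p_m$; $\Sigma^p=\bigcup_{\sigma\in\Sigma}\sigma^p$. For a variety $\mathcal{V}$, $\mathcal{V}^p$ is the variety defined by $\mathrm{Id}(\mathcal{V})^p$, $\mathrm{Id}(\mathcal{V})$ being all identities true in $\mathcal{V}$. *)

From mathcomp Require Import all_boot.
From Stdlib Require Import IndefiniteDescription.
Set Implicit Arguments. Unset Strict Implicit. Unset Printing Implicit Defensive.

Record signature := Signature { op_sym : Type; arity : op_sym -> nat }.

Definition plural (sg : signature) : Prop :=
  (forall o : op_sym sg, 0 < arity o) /\ (exists o : op_sym sg, 1 < arity o).

Inductive term (sg : signature) (V : Type) : Type :=
| Var : V -> term sg V
| App : forall o : op_sym sg, ('I_(arity o) -> term sg V) -> term sg V.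
Arguments Var {sg V}.
Arguments App {sg V}.

Record algebra (sg : signature) := Algebra {
  carrier :> Type;
  interp : forall o : op_sym sg, ('I_(arity o) -> carrier) -> carrier }.
Arguments interp {sg} A o args : rename.

Fixpoint eval (sg : signature) (A : algebra sg) (V : Type) (env : V -> A)
  (t : term sg V) : A :=
  match t with
  | Var v => env v
  | App o f => interp A o (fun i => eval env (f i))
  end.

Fixpoint subst (sg : signature) (V W : Type) (r : V -> term sg W)
  (t : term sg V) : term sg W :=
  match t with
  | Var v => r v
  | App o f => App o (fun i => subst r (f i))
  end.

Fixpoint occurs (sg : signature) (i : nat) (t : term sg nat) : Prop :=
  match t with
  | Var j => j = i
  | App o f => exists k, occurs i (f k)
  end.

Definition in_T (sg : signature) (m : nat) (t : term sg nat) : Prop :=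
  (forall i, occurs i t -> i < m) /\ (forall i, i < m -> occurs i t).

Definition ident (sg : signature) := (term sg nat * term sg nat)%type.

Definition sat (sg : signature) (A : algebra sg) (s : ident sg) : Prop :=
  forall env : nat -> A, eval env s.1 = eval env s.2.

Definition regular (sg : signature) (s : ident sg) : Prop :=
  forall i, occurs i s.1 <-> occurs i s.2.

Definition in_var (sg : signature) (Sig : ident sg -> Prop) (A : algebra sg) : Prop :=
  forall s, Sig s -> sat A s.

Definition IdV (sg : signature) (Sig : ident sg -> Prop) : ident sg -> Prop :=
  fun s => forall A : algebra sg, in_var Sig A -> sat A s.

Definition in_S (sg : signature) (A : algebra sg) : Prop :=
  forall s : ident sg, regular s -> sat A s.

Definition prolong (sg : signature) (Sig : ident sg -> Prop) : ident sg -> Prop :=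
  fun tau => exists (s : ident sg) (m : nat) (r : nat -> term sg nat),
    [/\ Sig s, 0 < m,
        (forall i, occurs i s.1 \/ occurs i s.2 -> in_T m (r i)) &
        tau = (subst r s.1, subst r s.2)].

Definition is_hom (sg : signature) (A B : algebra sg) (h : A -> B) : Prop :=
  forall o args, h (interp A o args) = interp B o (fun i => h (args i)).

Definition is_free (sg : signature) (P : algebra sg -> Prop) (X : Type)
  (B : algebra sg) (iota : X -> B) : Prop :=
  P B /\
  forall (A : algebra sg), P A -> forall f : X -> A,
    exists h : B -> A, [/\ is_hom h, (forall x, h (iota x) = f x) &
      forall h' : B -> A, is_hom h' -> (forall x, h' (iota x) = f x) ->
        forall b, h' b = h b].
Arguments is_free {sg} P {X} B iota.

Definition is_cong (sg : signature) (A : algebra sg) (th : A -> A -> Prop) : Prop :=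
  [/\ (forall x, th x x), (forall x y, th x y -> th y x),
      (forall x y z, th x y -> th y z -> th x z) &
      forall o (f g : 'I_(arity o) -> A), (forall i, th (f i) (g i)) ->
        th (interp A o f) (interp A o g)].
Arguments is_cong {sg} A th.

Definition cong_join (sg : signature) (A : algebra sg) (t1 t2 : A -> A -> Prop) :
  A -> A -> Prop :=
  fun x y => forall phi : A -> A -> Prop, is_cong A phi ->
    (forall a b, t1 a b -> phi a b) -> (forall a b, t2 a b -> phi a b) -> phi x y.

Arguments cong_join {sg} A t1 t2.

Definition qcarrier (A : Type) (th : A -> A -> Prop) : Type :=
  {P : A -> Prop | exists a, P = th a}.

Definition qclass (A : Type) (th : A -> A -> Prop) (a : A) : qcarrier th :=
  exist _ (th a) (ex_intro _ a erefl).

Definition qrepr (A : Type) (th : A -> A -> Prop) (c : qcarrier th) : A :=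
  proj1_sig (constructive_indefinite_description _ (proj2_sig c)).

Definition quot (sg : signature) (A : algebra sg) (th : A -> A -> Prop) : algebra sg :=
  @Algebra sg (qcarrier th)
    (fun o args => qclass th (interp A o (fun i => qrepr (args i)))).
Arguments quot {sg} A th.

Definition cong_quot (sg : signature) (A : algebra sg) (de ps : A -> A -> Prop) :
  quot A de -> quot A de -> Prop :=
  fun c d => exists a b : A, [/\ c = qclass de a, d = qclass de b & ps a b].

Arguments cong_quot {sg} A de ps.

Definition is_sl_replica (sg : signature) (A : algebra sg) (rho : A -> A -> Prop) : Prop :=
  [/\ is_cong A rho, in_S (quot A rho) &
      forall phi, is_cong A phi -> in_S (quot A phi) -> forall x y, rho x y -> phi x y].
Arguments is_sl_replica {sg} A rho.

Definition closed (sg : signature) (A : algebra sg) (P : A -> Prop) : Prop :=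
  forall o (args : 'I_(arity o) -> A), (forall i, P (args i)) -> P (interp A o args).
Arguments closed {sg} A P.

Definition subalg (sg : signature) (A : algebra sg) (P : A -> Prop)
  (HP : closed A P) : algebra sg :=
  @Algebra sg {x : A | P x}
    (fun o args => exist _ (interp A o (fun i => proj1_sig (args i)))
                          (HP o _ (fun i => proj2_sig (args i)))).

Definition classes_in (sg : signature) (Sig : ident sg -> Prop) (A : algebra sg)
  (th : A -> A -> Prop) : Prop :=
  forall a : A, exists HP : closed A (th a), in_var Sig (subalg HP).
Arguments classes_in {sg} Sig A th.

Definition in_VS (sg : signature) (Sig : ident sg -> Prop) (A : algebra sg) : Prop :=
  exists th, [/\ is_cong A th, in_S (quot A th) & classes_in Sig A th].

From Pilot Require Import Defs.
From mathcomp Require Import all_boot zify.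
From Stdlib Require Import FunctionalExtensionality PropExtensionality ProofIrrelevance.
Set Implicit Arguments. Unset Strict Implicit. Unset Printing Implicit Defensive.

(* Let A satisfy the prolongation of Id(V_t) and put x ~ y iff t(x,y) = x and
   t(y,x) = y.  For p, q in T_m the identity t(p,q) = p of V_t lies in the
   prolongation, so any two regular terms (renumbered into a common T_m) take
   ~-related values.  This makes ~ a congruence with quotient in S; conversely
   t(x,y) and t(y,x) are identified in every semilattice quotient, so ~ is the
   semilattice replica congruence.  On a ~-class t(x,y) = x for all x, y, and
   substituting t(x_i, Q) for x_i, with Q a term in all the variables, turns any
   identity of V_t into a prolonged one: the classes lie in V_t.  Finally
   V_t^p is closed under quotients, so all of this applies to B/delta, where
   (delta v rho_B)/delta coincides with ~. *)

Section Terms.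
Variable sg : signature.

Lemma eval_subst (A : algebra sg) V W (e : W -> A) (r : V -> term sg W) (u : term sg V) :
  eval e (subst r u) = eval (fun i => eval e (r i)) u.
Proof.
elim: u => [v|o f IH] //=; congr (interp A o).
by apply: functional_extensionality => i; apply: IH.
Qed.

Lemma eq_eval (A : algebra sg) (e1 e2 : nat -> A) u :
  (forall i, occurs i u -> e1 i = e2 i) -> eval e1 u = eval e2 u.
Proof.
elim: u => [v|o f IH] /= H; first exact: H.
congr (interp A o); apply: functional_extensionality => i.
by apply: IH => j Hj; apply: H; exists i.
Qed.

Lemma occurs_subst (r : nat -> term sg nat) u j :
  occurs j (subst r u) <-> exists i, occurs i u /\ occurs j (r i).
Proof.
elim: u => [v|o f IH] /=; first by split=> [H|[i [-> //]]]; exists v.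
split=> [[k /IH [i [Hi Hj]]]|[i [[k Hk] Hj]]]; first by exists i; split=> //; exists k.
by exists k; apply/IH; exists i.
Qed.

Lemma exists_occurs (Hpl : plural sg) (u : term sg nat) : exists i, occurs i u.
Proof.
elim: u => [j|o f IH] /=; first by exists j.
have [i Hi] := IH (Ordinal (Hpl.1 o)).
by exists i, (Ordinal (Hpl.1 o)).
Qed.

Lemma in_T_gt0 (Hpl : plural sg) m (u : term sg nat) : in_T m u -> 0 < m.
Proof. by have [i Hi] := exists_occurs Hpl u; case=> /(_ i Hi); case: m. Qed.

Fixpoint vars (u : term sg nat) : seq nat :=
  match u with
  | Var j => [:: j]
  | App o f => flatten [seq vars (f k) | k <- enum 'I_(arity o)]
  end.

Lemma occurs_vars u i : occurs i u <-> i \in vars u.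
Proof.
elim: u => [j|o f IH] /=; first by rewrite inE; split=> [->|/eqP ->].
split=> [[k /IH Hk]|/flattenP [s /mapP [k _ ->] /IH Hi]]; last by exists k.
by apply/flattenP; exists (vars (f k)) => //; apply/mapP; exists k; rewrite ?mem_enum.
Qed.

Definition var_bound (u : term sg nat) := \max_(j <- vars u) j.+1.

Lemma occurs_var_bound u i : occurs i u -> i < var_bound u.
Proof. by move/occurs_vars => Hi; apply: (@leq_bigmax_seq _ _ xpredT (fun j => j.+1) i Hi). Qed.

Definition varseq (u : term sg nat) := undup (vars u).

Definition renumber (u : term sg nat) (i : nat) : term sg nat := Var (index i (varseq u)).

Lemma occurs_varseq u i : occurs i u <-> i \in varseq u.
Proof. by rewrite mem_undup -occurs_vars. Qed.

Lemma in_T_renumber u w :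
  (forall i, occurs i w <-> occurs i u) -> in_T (size (varseq u)) (subst (renumber u) w).
Proof.
move=> Hw; split=> j.
- by rewrite occurs_subst => -[i [/Hw /occurs_varseq Hi /= <-]]; rewrite index_mem.
- move=> Hj; apply/occurs_subst; exists (nth 0 (varseq u) j).
  by rewrite /= index_uniq ?undup_uniq //; split=> //; apply/Hw/occurs_varseq/mem_nth.
Qed.

Lemma eval_renumber (A : algebra sg) (e : nat -> A) u w :
  (forall i, occurs i w -> occurs i u) ->
  eval (fun j => e (nth 0 (varseq u) j)) (subst (renumber u) w) = eval e w.
Proof.
move=> Hw; rewrite eval_subst; apply: eq_eval => i /Hw /occurs_varseq Hi.
by rewrite /= nth_index.
Qed.

End Terms.

Definition env2 (T : Type) (x y : T) : nat -> T := fun i => if i == 0 then x else y.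

Definition term_sub2 sg (t p q : term sg nat) := subst (env2 p q) t.

Definition term_op sg (A : algebra sg) (t : term sg nat) (x y : A) := eval (env2 x y) t.

Section BinaryTerm.
Variables (sg : signature) (t : term sg nat).
Hypothesis Ht : in_T 2 t.

Lemma eval_term_sub2 (A : algebra sg) p q (e : nat -> A) :
  eval e (term_sub2 t p q) = term_op t (eval e p) (eval e q).
Proof. by rewrite eval_subst; apply: eq_eval => i _; rewrite /env2; case: (i == 0). Qed.

Lemma occurs_term_sub2 p q j : occurs j (term_sub2 t p q) <-> occurs j p \/ occurs j q.
Proof.
rewrite occurs_subst; case: Ht => Hlt Hocc; split.
- by case=> i [/Hlt Hi]; rewrite /env2; case: eqP => _; [left|right].
- by case=> H; [exists 0 | exists 1]; split=> //; apply: Hocc.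
Qed.

Fixpoint chain k : term sg nat :=
  match k with 0 => Var 0 | k'.+1 => term_sub2 t (Var k'.+1) (chain k') end.

Lemma occurs_chain k j : occurs j (chain k) <-> j <= k.
Proof. by elim: k => [|k IH] /=; [lia | rewrite occurs_term_sub2 IH /=; lia]. Qed.

End BinaryTerm.

Lemma eval_hom sg (A B : algebra sg) (h : A -> B) (e : nat -> A) u :
  is_hom h -> eval (fun i => h (e i)) u = h (eval e u).
Proof.
move=> Hh; elim: u => [v|o f IH] //=; rewrite Hh; congr (interp B o).
exact: functional_extensionality.
Qed.

Lemma term_op_hom sg (A B : algebra sg) (h : A -> B) t x y :
  is_hom h -> term_op t (h x) (h y) = h (term_op t x y).
Proof.
move=> Hh; rewrite /term_op -eval_hom //; apply: eq_eval => i _.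
by rewrite /env2; case: (i == 0).
Qed.

Lemma subalg_eval sg (A : algebra sg) (P : A -> Prop) (HP : Defs.closed A P)
  (e : nat -> subalg HP) u :
  sval (eval e u) = eval (fun i => sval (e i)) u.
Proof.
elim: u => [v|o f IH] //=; congr (interp A o).
exact: functional_extensionality.
Qed.

Lemma eq_sval_irr T (P : T -> Prop) (x y : {z | P z}) : sval x = sval y -> x = y.
Proof. by apply: eq_sig_hprop => z p q; apply: proof_irrelevance. Qed.

Section Quotients.
Variables (sg : signature) (A : algebra sg) (th : A -> A -> Prop).

Lemma qreprK : cancel (@qrepr A th) (qclass th).
Proof.
case=> P HP; apply: eq_sval_irr; rewrite /qrepr /=.
by case: (IndefiniteDescription.constructive_indefinite_description _ _) => a /= ->.
Qed.

Hypothesis Hth : is_cong A th.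

Lemma qclass_eqP a b : qclass th a = qclass th b <-> th a b.
Proof.
have [Hr Hs Htr _] := Hth.
split=> [/(f_equal sval) /= ->|Hab]; first exact: Hr.
apply: eq_sval_irr => /=; apply: functional_extensionality => x.
apply: propositional_extensionality.
by split=> H; [apply: Htr (Hs _ _ Hab) H | apply: Htr Hab H].
Qed.

Lemma qclass_hom : @is_hom sg A (quot A th) (qclass th).
Proof.
have [_ Hs _ Hop] := Hth.
move=> o args; apply/qclass_eqP; apply: Hop => i; apply: Hs; apply/qclass_eqP.
exact: qreprK.
Qed.

Lemma eval_quot (c : nat -> quot A th) u :
  eval c u = qclass th (eval (fun i => qrepr (c i)) u).
Proof.
rewrite -(eval_hom _ _ qclass_hom); congr (eval _ u).
by apply: functional_extensionality => i; rewrite qreprK.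
Qed.

Lemma in_var_quot Sig : in_var Sig A -> in_var Sig (quot A th).
Proof. by move=> HA s Hs c; rewrite !eval_quot HA. Qed.

Lemma qclass_preim_cong (phi : quot A th -> quot A th -> Prop) :
  is_cong (quot A th) phi -> is_cong A (fun x y => phi (qclass th x) (qclass th y)).
Proof.
case=> Hr Hs Htr Hop; split=> [x|x y|x y z|o f g Hfg]; [exact: Hr | exact: Hs | exact: Htr |].
by rewrite !qclass_hom; apply: Hop.
Qed.

End Quotients.

Definition tsim sg (A : algebra sg) (t : term sg nat) (x y : A) :=
  term_op t x y = x /\ term_op t y x = y.

Lemma tsim_sym sg (A : algebra sg) t (x y : A) : tsim t x y -> tsim t y x.
Proof. by case. Qed.

Lemma term_op_comm_mod sg (A : algebra sg) t (phi : A -> A -> Prop) :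
  in_T 2 t -> is_cong A phi -> in_S (quot A phi) ->
  forall a b, phi (term_op t a b) (term_op t b a).
Proof.
move=> Ht Hphi HS a b.
have Hreg : regular (t, term_sub2 t (Var 1) (Var 0)).
  move=> i /=; rewrite (occurs_term_sub2 Ht) /=.
  by case: Ht => Hlt Hocc; split=> [/Hlt|Hi]; [lia | apply: Hocc; lia].
apply/(qclass_eqP Hphi); rewrite -!(term_op_hom _ _ _ (qclass_hom Hphi)).
by have := HS _ Hreg (env2 (qclass phi a) (qclass phi b)); rewrite /= eval_term_sub2.
Qed.

Lemma tsim_least sg (A : algebra sg) t (phi : A -> A -> Prop) :
  in_T 2 t -> is_cong A phi -> in_S (quot A phi) -> forall x y, tsim t x y -> phi x y.
Proof. by move=> Ht Hphi HS x y [E1 E2]; rewrite -E1 -{2}E2; apply: term_op_comm_mod. Qed.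

Section LeftZeroProlongation.
Variables (sg : signature) (Sig : ident sg -> Prop) (t : term sg nat).
Hypothesis Hpl : plural sg.
Hypothesis Ht : in_T 2 t.
Hypothesis HVt : forall A : algebra sg, in_var Sig A -> sat A (t, Var 0).
Variable A : algebra sg.
Hypothesis HA : in_var (prolong (IdV Sig)) A.

Lemma term_op_T m p q (e : nat -> A) :
  in_T m p -> in_T m q -> term_op t (eval e p) (eval e q) = eval e p.
Proof.
move=> Hp Hq.
have Hpr : prolong (IdV Sig) (term_sub2 t p q, p).
  exists (t, Var 0), m, (env2 p q); split=> //; first exact: in_T_gt0 Hp.
  by move=> i /= [/(proj1 Ht) Hi | <-]; rewrite /env2; case: (i == 0).
by have := HA Hpr e; rewrite /= eval_term_sub2.
Qed.

Lemma tsim_regular u v (e : nat -> A) : regular (u, v) -> tsim t (eval e u) (eval e v).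
Proof.
move=> Huv.
have Hu := in_T_renumber (u := u) (w := u) (fun i => iff_refl (occurs i u)).
have Hv := in_T_renumber (u := u) (w := v) (fun i => iff_sym (Huv i)).
rewrite -(eval_renumber e (u := u) (w := u)) //.
rewrite -(eval_renumber e (u := u) (w := v)) => [|i /Huv //].
by split; [exact: term_op_T Hu Hv | exact: term_op_T Hv Hu].
Qed.

Lemma tsim_refl (x : A) : tsim t x x.
Proof. exact: (tsim_regular (u := Var 0) (v := Var 0) (fun _ => x)). Qed.

Lemma tsim_trans (a b c : A) : tsim t a b -> tsim t b c -> tsim t a c.
Proof.
move=> [Hab Hba] [Hbc Hcb].
pose u := term_sub2 t (Var 0) (term_sub2 t (Var 1) (Var 2)).
pose v := term_sub2 t (Var 2) (term_sub2 t (Var 1) (Var 0)).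
have Huv : regular (u, v) by move=> j; rewrite /= !(occurs_term_sub2 Ht) /=; lia.
have := tsim_regular (nth c [:: a; b]) Huv.
by rewrite /u /v !eval_term_sub2 /= Hbc Hab Hba Hcb.
Qed.

Lemma tsim_compat o (f g : 'I_(arity o) -> A) :
  (forall i, tsim t (f i) (g i)) -> tsim t (interp A o f) (interp A o g).
Proof.
move=> Hfg.
pose ord (j : nat) : 'I_(arity o) := insubd (Ordinal (Hpl.1 o)) j.
have ordK (k : 'I_(arity o)) : ord k = k by apply: val_inj; rewrite /ord val_insubd ltn_ord.
pose e j := if odd j then g (ord j./2) else f (ord j./2).
have eE (k : 'I_(arity o)) : e k.*2 = f k by rewrite /e odd_double doubleK ordK.
have eO (k : 'I_(arity o)) : e k.*2.+1 = g k by rewrite /e /= odd_double uphalf_double ordK.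
pose u := App o (fun k => term_sub2 t (Var k.*2) (Var k.*2.+1)).
pose v := App o (fun k => term_sub2 t (Var k.*2.+1) (Var k.*2)).
have Huv : regular (u, v).
  by move=> j /=; split=> -[k]; rewrite !(occurs_term_sub2 Ht) /= => Hk; exists k;
    rewrite (occurs_term_sub2 Ht) /=; lia.
have Eu : eval e u = interp A o f.
  rewrite /u /=; congr (interp A o); apply: functional_extensionality => k.
  by rewrite eval_term_sub2 /= eE eO (Hfg k).1.
have Ev : eval e v = interp A o g.
  rewrite /v /=; congr (interp A o); apply: functional_extensionality => k.
  by rewrite eval_term_sub2 /= eE eO (Hfg k).2.
by rewrite -Eu -Ev; apply: tsim_regular.
Qed.

Lemma tsim_interp_const o (a : A) : tsim t (interp A o (fun _ => a)) a.
Proof.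
have Hreg : regular (App o (fun _ => Var 0), Var 0).
  by move=> j /=; split=> [[]|<-] //; exists (Ordinal (Hpl.1 o)).
exact: (tsim_regular (fun _ => a) Hreg).
Qed.

Lemma tsim_cong : is_cong A (tsim t).
Proof. by split; [exact: tsim_refl | exact: tsim_sym | exact: tsim_trans | exact: tsim_compat]. Qed.

Lemma quot_tsim_in_S : in_S (quot A (tsim t)).
Proof.
move=> s Hs c; rewrite !(eval_quot tsim_cong).
by apply/(qclass_eqP tsim_cong); apply: tsim_regular.
Qed.

Lemma tsim_sl_replica : is_sl_replica A (tsim t).
Proof. by split; [exact: tsim_cong | exact: quot_tsim_in_S | move=> phi; exact: tsim_least]. Qed.

Lemma IdV_left_zero s (e : nat -> A) :
  IdV Sig s -> (forall i j, term_op t (e i) (e j) = e i) -> eval e s.1 = eval e s.2.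
Proof.
case: s => u v /= Huv He.
have Echain k : eval e (chain t k) = e k.
  by elim: k => [|k IH] //=; rewrite eval_term_sub2 IH He.
pose N := maxn (var_bound u) (var_bound v).
pose r i := term_sub2 t (Var i) (chain t N).
have Hpr : prolong (IdV Sig) (subst r u, subst r v).
  exists (u, v), N.+1, r; split=> // i Hi.
  have HiN : i < N by rewrite /N; case: Hi => /occurs_var_bound /=; lia.
  by split=> j; rewrite (occurs_term_sub2 Ht) (occurs_chain Ht) /=; lia.
have Er : (fun i => eval e (r i)) = e.
  by apply: functional_extensionality => i; rewrite eval_term_sub2 /= Echain He.
by have := HA Hpr e; rewrite /= !eval_subst Er.
Qed.

Lemma tsim_classes_in : classes_in Sig A (tsim t).
Proof.
move=> a.
have Hcl : Defs.closed A (tsim t a).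
  move=> o args Hargs; apply: tsim_trans (tsim_sym (tsim_interp_const o a)) _.
  exact: tsim_compat.
exists Hcl => s Hs e; apply: eq_sval_irr; rewrite !subalg_eval.
apply: IdV_left_zero => [B HB | i j]; first exact: HB _ Hs.
exact: (tsim_trans (tsim_sym (proj2_sig (e i))) (proj2_sig (e j))).1.
Qed.

End LeftZeroProlongation.

Section QuotientReplica.
Variables (sg : signature) (Sig : ident sg -> Prop) (t : term sg nat).
Hypothesis Hpl : plural sg.
Hypothesis Ht : in_T 2 t.
Hypothesis HVt : forall A : algebra sg, in_var Sig A -> sat A (t, Var 0).
Variable B : algebra sg.
Hypothesis HB : in_var (prolong (IdV Sig)) B.
Variables delta rho : B -> B -> Prop.
Hypothesis Hdelta : is_cong B delta.
Hypothesis Hrho : is_sl_replica B rho.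

Lemma cong_quot_join_sub_tsim c d :
  cong_quot B delta (cong_join B delta rho) c d -> tsim t c d.
Proof.
case=> a [b [-> -> Hab]].
have HQ := in_var_quot Hdelta HB.
have [_ _ rho_min] := Hrho.
apply: (Hab (fun x y => @tsim _ (quot B delta) t (qclass delta x) (qclass delta y))).
- exact: qclass_preim_cong (tsim_cong Hpl Ht HVt HQ).
- by move=> x y /(qclass_eqP Hdelta) ->; apply: tsim_refl HQ _.
- move=> x y /(rho_min _ (tsim_cong Hpl Ht HVt HB) (quot_tsim_in_S Hpl Ht HVt HB)) [E1 E2].
  by split; rewrite term_op_hom ?E1 ?E2 //; apply: qclass_hom.
Qed.

Lemma tsim_sub_cong_quot_join c d :
  tsim t c d -> cong_quot B delta (cong_join B delta rho) c d.
Proof.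
rewrite -(qreprK c) -(qreprK d); move: (qrepr c) (qrepr d) => a b.
rewrite /tsim !(term_op_hom _ _ _ (qclass_hom Hdelta)).
move=> [/(qclass_eqP Hdelta) E1 /(qclass_eqP Hdelta) E2].
have [Hrc HrS _] := Hrho.
exists a, b; split=> // phi [_ Hs Htr _] Hd Hr.
apply: Htr (Hs _ _ (Hd _ _ E1)) (Htr _ _ _ _ (Hd _ _ E2)).
exact: Hr _ _ (term_op_comm_mod Ht Hrc HrS _ _).
Qed.

Lemma cong_quot_join_tsim : cong_quot B delta (cong_join B delta rho) = tsim t.
Proof.
apply: functional_extensionality => c; apply: functional_extensionality => d.
apply: propositional_extensionality; split.
- exact: cong_quot_join_sub_tsim.
- exact: tsim_sub_cong_quot_join.
Qed.

End QuotientReplica.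

Theorem proposition5p2 (sg : signature) (Hpl : plural sg)
  (Sig : ident sg -> Prop) (t : term sg nat) (Ht : in_T 2 t)
  (HVt : forall A : algebra sg, in_var Sig A -> sat A (t, Var 0))
  (X : Type) (B : algebra sg) (iota : X -> B)
  (HB : is_free (in_var (prolong (IdV Sig))) B iota)
  (delta : B -> B -> Prop) (Hdelta : is_cong B delta)
  (rhoB : B -> B -> Prop) (Hrho : is_sl_replica B rhoB) :
  in_VS Sig (quot B delta) /\
  is_sl_replica (quot B delta) (cong_quot B delta (cong_join B delta rhoB)) /\
  classes_in Sig (quot B delta) (cong_quot B delta (cong_join B delta rhoB)).
Proof.
have HBp : in_var (prolong (IdV Sig)) B by case: HB.
have HQ := in_var_quot Hdelta HBp.
rewrite (cong_quot_join_tsim Hpl Ht HVt HBp Hdelta Hrho).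
have Hrep := tsim_sl_replica Hpl Ht HVt HQ.
have Hcl := tsim_classes_in Hpl Ht HVt HQ.
have [Hc HS _] := Hrep.
by split; [exists (tsim t) | split].
Qed.
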